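(* Let $p$ be a propositional variable. The infinite set $\Sigma=\{\blacksquare^n p: n\in\mathbb{N}\}\cup\{\neg\mathsf{H}p\}$ is not satisfiable in any $\mathsf{TLAE}$-model (there is no $\mathsf{TLAE}$-model $\mathfrak{M}$ and moment $w$ with $\mathfrak{M},w\models\psi$ for all $\psi\in\Sigma$), whereas every finite subset of $\Sigma$ is satisfiable at some moment of some $\mathsf{TLAE}$-model. Consequently $\mathsf{TLAE}$ is not compact with respect to $\mathsf{TLAE}$-models.
   Context: Here $\blacksquare^n$ denotes $n$-fold iteration of $\blacksquare$ ($\blacksquare^0 p=p$). Language: fix finite sets $\mathtt{Action}=\{\delta_1,\dots,\delta_n\}$, $\mathtt{Agent}=\{\alpha_1,\dots,\alpha_m\}$; action types $\mathtt{Action}^*$ generated by $\Delta::=\delta_j\mid\Delta\cup\Delta\mid\overline{\Delta}$; propositional constants $\mathfrak{d}^{\alpha_i}_j$, $\mathfrak{e}^{\alpha_i}$; variables $\mathtt{Var}$. Formulas: $\phi::=p\mid\mathfrak{e}^{\alpha_i}\mid\mathfrak{d}^{\alpha_i}_j\mid\neg\phi\mid\phi\to\phi\mid\Box\phi\mid[\mathsf{A}]\phi\mid\blacksquare\phi\mid\mathsf{H}\phi$. Translation: $t(\delta_j^{\alpha_i})=\mathfrak{d}^{\alpha_i}_j$, $t(\overline{\Delta}^{\alpha_i})=\neg t(\Delta^{\alpha_i})$, $t(\Delta^{\alpha_i}\cup\Gamma^{\alpha_k})=t(\Delta^{\alpha_i})\vee t(\Gamma^{\alpha_k})$. Semantics: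 an $\mathcal{L}$-frame is $\langle W,\{W_{\mathfrak{d}^{\alpha_i}_j}\},\{W_{\mathfrak{e}^{\alpha_i}}\},R_\Box,R_{\mathsf{A}},R_\blacksquare,R_{\mathsf{H}}\rangle$ with subsets $W_c\subseteq W$ and binary relations on $W$; a model adds $V:\mathtt{Var}\to\mathcal{P}(W)$; constants $c$ are true exactly on $W_c$; $\Box,[\mathsf{A}],\blacksquare,\mathsf{H}$ are interpreted by universal quantification over $R_\Box,R_{\mathsf{A}},R_\blacksquare,R_{\mathsf{H}}$-successors, Booleans as usual. $W_{t(\delta_j^{\alpha_i})}=W_{\mathfrak{d}^{\alpha_i}_j}$, $W_{t(\overline{\Delta}^{\alpha_i})}=W\setminus W_{t(\Delta^{\alpha_i})}$, $W_{t(\Delta^{\alpha_i}\cup\Gamma^{\alpha_k})}=W_{t(\Delta^{\alpha_i})}\cup W_{t(\Gamma^{\alpha_k})}$. A $\mathsf{TLAE}$-frame satisfies: (pA3) $R_{\mathsf{A}}wu\wedge R_{\mathsf{A}}wv\Rightarrow u=v$; (pA4) $R_{\mathsf{A}}\subseteq R_\Box$; (pA5) for every $w$, pairwise distinct agents $\alpha_1,\dots,\alpha_k$ and $\Delta_1,\dots,\Delta_k\in\mathtt{Action}^*$, if each $W_{t(\Delta_i^{\alpha_i})}$ contains an $R_\Box$-successor of $w$, then $\bigcap_iW_{t(\Delta_i^{\alpha_i})}$ contains one; (pA6) if some $R_\Box$-successor of $w$ is in $W_{\mathfrak{e}^{\alpha_i}}$ then some $R_\Box$-successor of $w$ is not;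 (pA10;A11) $R_\Box wv$ iff $R_\blacksquare vw$; (pA12) $R_\blacksquare wu\wedge R_\blacksquare wv\Rightarrow u=v$; (pA9;A14) $R_{\mathsf{H}}$ is the transitive closure of $R_\blacksquare$; (pA13) for every $w$, either $w$ has no $R_{\mathsf{H}}$-successor or there is $u$ with $R_{\mathsf{H}}wu$ having no $R_{\mathsf{H}}$-successor. A $\mathsf{TLAE}$-model is a model over a $\mathsf{TLAE}$-frame. *)

From mathcomp Require Import all_boot.
From Stdlib Require Import List Relation_Operators.

Unset Printing Implicit Defensive.

(* Action = 'I_nA  (delta_1..delta_nA), Agent = 'I_nG  (alpha_1..alpha_nG),
   propositional variables Var = nat. *)

Inductive actType (nA : nat) : Type :=
  | AAtom : 'I_nA -> actType nA
  | AUnion : actType nA -> actType nA -> actType nA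
  | ACompl : actType nA -> actType nA.

Inductive form (nA nG : nat) : Type :=
  | FVar : nat -> form nA nG
  | FE : 'I_nG -> form nA nG
  | FD : 'I_nG -> 'I_nA -> form nA nG
  | FNeg : form nA nG -> form nA nG
  | FImp : form nA nG -> form nA nG -> form nA nG
  | FBox : form nA nG -> form nA nG
  | FAct : form nA nG -> form nA nG
  | FBBox : form nA nG -> form nA nG
  | FH : form nA nG -> form nA nG.

Arguments FVar {nA nG}.
Arguments FE {nA nG}.
Arguments FD {nA nG}.
Arguments FNeg {nA nG}.
Arguments FImp {nA nG}.
Arguments FBox {nA nG}.
Arguments FAct {nA nG}.
Arguments FBBox {nA nG}.
Arguments FH {nA nG}.
Arguments AAtom {nA}.
Arguments AUnion {nA}.
Arguments ACompl {nA}.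

Fixpoint tr {nA nG : nat} (a : 'I_nG) (D : actType nA) : form nA nG :=
  match D with
  | AAtom j => FD a j
  | AUnion D1 D2 => FImp (FNeg (tr a D1)) (tr a D2)   (* phi \/ psi := ~phi -> psi *)
  | ACompl D1 => FNeg (tr a D1)
  end.

Record frame (nA nG : nat) : Type := Frame {
  W : Type;
  Wd : 'I_nG -> 'I_nA -> W -> Prop;
  We : 'I_nG -> W -> Prop;
  RBox : W -> W -> Prop;
  RA : W -> W -> Prop;
  RBB : W -> W -> Prop;
  RH : W -> W -> Prop
}.

Arguments W {nA nG}.
Arguments Wd {nA nG}.
Arguments We {nA nG}.
Arguments RBox {nA nG}.
Arguments RA {nA nG}.
Arguments RBB {nA nG}.
Arguments RH {nA nG}.

Record model (nA nG : nat) : Type := Model {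
  mframe : frame nA nG;
  V : nat -> W mframe -> Prop
}.

Arguments mframe {nA nG}.
Arguments V {nA nG}.

Fixpoint ext {nA nG : nat} (F : frame nA nG) (a : 'I_nG) (D : actType nA)
  : W F -> Prop :=
  match D with
  | AAtom j => Wd F a j
  | AUnion D1 D2 => fun x => ext F a D1 x \/ ext F a D2 x
  | ACompl D1 => fun x => ~ ext F a D1 x
  end.

Fixpoint sat {nA nG : nat} (M : model nA nG) (w : W (mframe M)) (phi : form nA nG)
  : Prop :=
  match phi with
  | FVar q => V M q w
  | FE a => We (mframe M) a w
  | FD a j => Wd (mframe M) a j w
  | FNeg psi => ~ sat M w psi
  | FImp psi chi => sat M w psi -> sat M w chi
  | FBox psi => forall v, RBox (mframe M) w v -> sat M v psi
  | FAct psi => forall v, RA (mframe M) w v -> sat M v psi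
  | FBBox psi => forall v, RBB (mframe M) w v -> sat M v psi
  | FH psi => forall v, RH (mframe M) w v -> sat M v psi
  end.

Definition TLAE_frame {nA nG : nat} (F : frame nA nG) : Prop :=
  (forall w u v, RA F w u -> RA F w v -> u = v) /\
  (forall w u, RA F w u -> RBox F w u) /\
  (forall (w : W F) (s : list ('I_nG * actType nA)%type),
      s <> nil -> List.NoDup (List.map fst s) ->
      (forall c, List.In c s -> exists v, RBox F w v /\ ext F c.1 c.2 v) ->
      exists v, RBox F w v /\ forall c, List.In c s -> ext F c.1 c.2 v) /\
  (forall w (a : 'I_nG),
      (exists v, RBox F w v /\ We F a v) ->
      exists v, RBox F w v /\ ~ We F a v) /\
  (forall w v, RBox F w v <-> RBB F v w) /\
  (forall w u v, RBB F w u -> RBB F w v -> u = v) /\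
  (forall w v, RH F w v <-> clos_trans (W F) (RBB F) w v) /\
  (forall w, (forall u, ~ RH F w u) \/
             exists u, RH F w u /\ forall v, ~ RH F u v).

Definition TLAE_model {nA nG : nat} (M : model nA nG) : Prop :=
  TLAE_frame (mframe M).

Definition TLAE_satisfiable {nA nG : nat} (G : form nA nG -> Prop) : Prop :=
  exists (M : model nA nG) (w : W (mframe M)),
    TLAE_model M /\ forall phi, G phi -> sat M w phi.

Definition TLAE_compact (nA nG : nat) : Prop :=
  forall G : form nA nG -> Prop,
    (forall l : list (form nA nG), (forall phi, List.In phi l -> G phi) ->
       TLAE_satisfiable (fun phi => List.In phi l)) ->
    TLAE_satisfiable G.

Definition Sigma (nA nG : nat) (p : nat) (phi : form nA nG) : Prop :=
  (exists k : nat, phi = iter k FBBox (FVar p)) \/ phi = FNeg (FH (FVar p)).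

(* Every iterate [BB^k p] holding at [w] forces [p] at every point reachable
   from [w] by a finite [RBB]-chain, i.e. at every [RH]-successor, so [~ H p]
   cannot hold as well.  A finite part of Sigma only mentions [BB^k p] for
   [k < m]; it holds at the start of the chain [0 -> 1 -> ... -> m], with [p]
   true exactly below [m]: the chain ends at [m], where [p] fails, and the
   past of each point is a single branch. *)

From Stdlib Require Import List Relation_Operators Operators_Properties Lia.
From mathcomp Require Import all_boot zify.

Lemma sat_iter_FBBox_clos_trans {nA nG : nat} (M : model nA nG)
    (phi : form nA nG) (w v : W (mframe M)) :
  (forall k, sat M w (iter k FBBox phi)) ->
  clos_trans _ (RBB (mframe M)) w v -> sat M v phi.
Proof.
move=> + wv; elim: {wv}(clos_trans_t1n _ _ _ _ wv) => [x y xy | x y z xy _ IH] sat_x.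
- exact: (sat_x 1 y xy).
- by apply: IH => k; apply: (sat_x k.+1 y xy).
Qed.

Lemma Sigma_unsatisfiable (nA nG p : nat) : ~ TLAE_satisfiable (Sigma nA nG p).
Proof.
move=> [M [w [[_ [_ [_ [_ [_ [_ [RH_clos _]]]]]]] sat_w]]].
have sat_iter k : sat M w (iter k FBBox (FVar p)) by apply: sat_w; left; exists k.
have : sat M w (FNeg (FH (FVar p))) by apply: sat_w; right.
by apply=> v /RH_clos; exact: (@sat_iter_FBBox_clos_trans _ _ M (FVar p) _ _ sat_iter).
Qed.

Section Chain.

Variables (nA nG m : nat).

Definition chain_step (w v : nat) : Prop := v = w.+1 /\ w < m.

Lemma clos_trans_chain_step (i j : nat) :
  clos_trans nat chain_step i j <-> i < j <= m.
Proof.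
split.
- by elim=> [x y [-> x_lt_m] | x y z _ + _]; lia.
- case/andP; elim: j => [//|j IH] ij jm.
  have step : chain_step j j.+1 by split; lia.
  case: (ltnP i j) => [i_lt_j | j_le_i]; last by have -> : i = j by [lia]; apply: t_step.
  by apply: (t_trans _ _ _ j); [apply: IH; lia | apply: t_step].
Qed.

Definition chain_frame : frame nA nG :=
  Frame nA nG nat (fun _ _ _ => False) (fun _ _ => False)
    (fun w v => chain_step v w) (fun _ _ => False)
    chain_step (clos_trans nat chain_step).

Definition chain_model : model nA nG :=
  Model nA nG chain_frame (fun _ i => i < m).

Lemma chain_model_TLAE : TLAE_model chain_model.
Proof.
split; first by move=> ? ? ? [].
split; first by move=> ? ? [].
split.
  move=> w [|c s] // _ _ in_box.
  have [v [box_wv _]] := in_box c (or_introl erefl).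
  exists v; split=> // c' /in_box [v' [box_wv' ext_v']].
  by have -> : v = v' by [case: box_wv box_wv' => -> _ [/succn_inj]].
split; first by move=> w a [v [_ []]].
split; first by [].
split; first by move=> w u v [-> _] [-> _].
split; first by [].
move=> w; case: (ltnP w m) => [w_lt_m | m_le_w].
- by right; exists m; split=> [|v]; rewrite /= !clos_trans_chain_step; lia.
- by left=> u; rewrite /= clos_trans_chain_step; lia.
Qed.

Lemma sat_chain_iter_FBBox (p k i : nat) :
  i + k < m -> sat chain_model i (iter k FBBox (FVar p)).
Proof.
elim: k i => [|k IH] i ikm /=; first by rewrite addn0 in ikm.
by move=> _ [-> _]; apply: IH; lia.
Qed.

Lemma sat_chain_neg_H (p : nat) : 0 < m -> sat chain_model 0 (FNeg (FH (FVar p))).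
Proof.
move=> m_gt0 sat_H.
have reach_m : clos_trans nat chain_step 0 m by apply/clos_trans_chain_step; rewrite m_gt0 /=.
by have /= := sat_H m reach_m; rewrite ltnn.
Qed.

End Chain.

Lemma In_bounded_witness (A : Type) (R : A -> nat -> Prop) (l : list A) :
  (forall a, In a l -> exists n, R a n) ->
  exists m, forall a, In a l -> exists2 n, n < m & R a n.
Proof.
elim: l => [|b l IH] witness; first by exists 0.
have [m bound_l] : exists m, forall a, In a l -> exists2 n, n < m & R a n.
  by apply: IH => a la; apply: witness; right.
have [n Rbn] := witness b (or_introl erefl).
exists (maxn n.+1 m) => a [<- | la]; first by exists n; first lia.
by have [k km Rak] := bound_l a la; exists k; first lia.
Qed.

Lemma Sigma_finitely_satisfiable (nA nG p : nat) (l : list (form nA nG)) :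
  (forall phi, In phi l -> Sigma nA nG p phi) ->
  TLAE_satisfiable (fun phi => In phi l).
Proof.
move=> l_Sigma.
have [m bound_l] : exists m, forall phi, In phi l -> exists2 k, k < m &
    phi = iter k FBBox (FVar p) \/ phi = FNeg (FH (FVar p)).
  apply: In_bounded_witness => phi /l_Sigma [[k ->] | ->]; first by exists k; left.
  by exists 0; right.
exists (chain_model nA nG m), 0; split; first exact: chain_model_TLAE.
move=> phi /bound_l [k km [-> | ->]].
- exact: sat_chain_iter_FBBox.
- by apply: sat_chain_neg_H; lia.
Qed.

Theorem mainTheorem5 (nA nG : nat) (p : nat) :
  ~ TLAE_satisfiable (Sigma nA nG p) /\
  (forall l : list (form nA nG),
      (forall phi, List.In phi l -> Sigma nA nG p phi) ->
      TLAE_satisfiable (fun phi => List.In phi l)) /\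
  ~ TLAE_compact nA nG.
Proof.
split; first exact: Sigma_unsatisfiable.
split; first exact: Sigma_finitely_satisfiable.
move=> compact; apply: (Sigma_unsatisfiable nA nG p).
by apply: compact; apply: Sigma_finitely_satisfiable.
Qed.
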